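(* Let $M\ge 1$ and $0<p_1<p_2<\cdots<p_M$ be real numbers. For arbitrary real constants $c_1,\ldots,c_M$ define, for $(x,t)\in\mathbb{R}^2$, \[ \tau(x,t)=\sum_{A\in\{-1,1\}^M} e^{\Theta_A},\qquad \Theta_A=\sum_{j=1}^M \alpha_j\,\theta_j+\log\Delta_A, \] where $A=(\alpha_1,\ldots,\alpha_M)$, $\theta_j=p_j\,(x+p_j^2\,t+c_j)$, and $\Delta_A=\big|\prod_{1\le j<k\le M}(\alpha_k p_k-\alpha_j p_j)\big|$ (the absolute value of the Vandermonde determinant of $\alpha_1p_1,\ldots,\alpha_Mp_M$). Then $2(\log\tau)_{xx}=2(\log\tau_H)_{xx}$, where $\tau_H$ is the Hirota $\tau$-function \[ \tau_H=\sum_{\mu_1,\ldots,\mu_M=0,1}\exp\Big(\sum_{j=1}^M\mu_j\eta_j+\sum_{1\le j<k\le M}b_{jk}\,\mu_j\mu_k\Big), \] with $\eta_j=2p_j\,(x+p_j^2\,t+\tilde c_j)$, $b_{jk}=\log\big[(p_k-p_j)^2/(p_k+p_j)^2\big]$, and $\tilde c_j=c_j+\frac{1}{2p_j}\log\Big|\prod_{k\neq j}\frac{p_k+p_j}{p_k-p_j}\Big|$. Consequently, $u=2(\log\tau)_{xx}$, as $c_1,\ldots,c_M$ range over $\mathbb{R}$, gives exactly the $M$-soliton solutions $u=2(\log\tau_H)_{xx}$ (with arbitrary real $\tilde c_1,\ldots,\tilde c_M$) of the KdV equation $4u_t=u_{xxx}+6uu_x$.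
   Context: Subscripts denote partial derivatives. The $M$-soliton solution of the KdV equation $4u_t=u_{xxx}+6uu_x$ with parameters $0<p_1<\cdots<p_M$ and arbitrary real constants $\tilde c_j$ is $u=2(\log\tau_H)_{xx}$ with $\tau_H$ as given in the claim. *)

From HB Require Import structures.
From mathcomp Require Import all_boot all_order all_algebra.
From mathcomp Require Import all_classical all_reals all_analysis.
Set Implicit Arguments. Unset Strict Implicit. Unset Printing Implicit Defensive.
Import Order.TTheory GRing.Theory Num.Theory.
Local Open Scope ring_scope.

Section KdV.
Variables (R : realType) (M : nat).

(* sign vector A in {-1,1}^M encoded by a boolean finite function *)
Definition sgn (b : bool) : R := if b then 1 else -1.
(* 0/1 vector mu encoded by a boolean finite function *)
Definition ind (b : bool) : R := if b then 1 else 0.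

Definition theta (p c : 'I_M -> R) (j : 'I_M) (x t : R) : R :=
  p j * (x + p j ^+ 2 * t + c j).

Definition DeltaA (p : 'I_M -> R) (A : {ffun 'I_M -> bool}) : R :=
  `| \prod_(j < M) \prod_(k < M | (j < k)%N)
       (sgn (A k) * p k - sgn (A j) * p j) |.

Definition ThetaA (p c : 'I_M -> R) (A : {ffun 'I_M -> bool}) (x t : R) : R :=
  \sum_(j < M) sgn (A j) * theta p c j x t + ln (DeltaA p A).

Definition tau (p c : 'I_M -> R) (x t : R) : R :=
  \sum_(A : {ffun 'I_M -> bool}) expR (ThetaA p c A x t).

Definition eta (p ct : 'I_M -> R) (j : 'I_M) (x t : R) : R :=
  2 * p j * (x + p j ^+ 2 * t + ct j).

Definition bjk (p : 'I_M -> R) (j k : 'I_M) : R :=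
  ln ((p k - p j) ^+ 2 / (p k + p j) ^+ 2).

Definition tauH (p ct : 'I_M -> R) (x t : R) : R :=
  \sum_(mu : {ffun 'I_M -> bool})
     expR (\sum_(j < M) ind (mu j) * eta p ct j x t
           + \sum_(j < M) \sum_(k < M | (j < k)%N)
                bjk p j k * ind (mu j) * ind (mu k)).

Definition ctilde (p c : 'I_M -> R) (j : 'I_M) : R :=
  c j + (2 * p j)^-1 *
        ln `| \prod_(k < M | k != j) ((p k + p j) / (p k - p j)) |.

Definition u (p c : 'I_M -> R) (x t : R) : R :=
  2 * derive1n 2 (fun y => ln (tau p c y t)) x.

Definition uH (p ct : 'I_M -> R) (x t : R) : R :=
  2 * derive1n 2 (fun y => ln (tauH p ct y t)) x.

End KdV.

From Pilot Require Import Defs.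
From HB Require Import structures.
From mathcomp Require Import all_boot all_order all_algebra.
From mathcomp Require Import all_classical all_reals all_analysis.
From mathcomp Require Import ring.
Import Order.TTheory GRing.Theory Num.Theory.
Local Open Scope ring_scope.

(* Writing mu_j = (1 + alpha_j) / 2, the exponent Theta_A splits as
   Theta_{(-1,...,-1)} plus the Hirota exponent of mu with the shifted phases
   c~: a Vandermonde factor |alpha_k p_k - alpha_j p_j| equals p_k - p_j when
   alpha_j = alpha_k and p_k + p_j otherwise, and this dependence on the signs
   is absorbed by the phase shifts and the interaction coefficients b_jk.
   Hence tau = exp(Theta_{(-1,...,-1)}) tau_H, and since Theta_{(-1,...,-1)} is
   affine in x, log tau and log tau_H have the same second x-derivative.
   The map c |-> c~ is a translation, so every c~ is reached. *)

Lemma ln_prod (R : realType) (I : Type) (r : seq I) (P : pred I) (F : I -> R) :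
  (forall i, P i -> 0 < F i) ->
  ln (\prod_(i <- r | P i) F i) = \sum_(i <- r | P i) ln (F i).
Proof.
move=> F_gt0; elim: r => [|i r IH]; first by rewrite !big_nil ln1.
rewrite !big_cons; case: ifP => Pi //.
by rewrite lnM ?IH // posrE; [exact: F_gt0 | exact: prodr_gt0].
Qed.

Lemma sum_ord_neq (V : nmodType) (n : nat) (G : 'I_n -> 'I_n -> V) :
  \sum_(j < n) \sum_(k < n | k != j) G j k =
  \sum_(j < n) \sum_(k < n | (j < k)%N) (G j k + G k j).
Proof.
have split_neq j : \sum_(k < n | k != j) G j k =
    \sum_(k < n | (j < k)%N) G j k + \sum_(k < n | (k < j)%N) G j k.
  rewrite (bigID (fun k : 'I_n => (j < k)%N)) /=.
  by congr (_ + _); apply: eq_bigl => k; rewrite -val_eqE /=; case: ltngtP.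
rewrite (eq_bigr _ (fun j _ => split_neq j)) big_split /=.
rewrite [RHS](eq_bigr _ (fun j _ => big_split _ _ _ _ _)) big_split /=.
by congr (_ + _); rewrite (exchange_big_dep xpredT).
Qed.

Section RealDerivatives.
Variable R : realType.

Lemma derivable_affine (a b x : R) : derivable (fun y => a * y + b) x 1.
Proof. by rewrite (_ : (fun y => _) = a *: (@id R) + cst b). Qed.

Lemma derive_affine (a b x : R) : 'D_1 (fun y => a * y + b) x = a.
Proof.
rewrite (_ : (fun y => _) = a *: (@id R) + cst b) // deriveD // deriveZ //.
by rewrite derive_id derive_cst addr0 /GRing.scale /= mulr1.
Qed.

Lemma derivable_comp (f g : R -> R) (x : R) :
  derivable f x 1 -> derivable g (f x) 1 -> derivable (g \o f) x 1.
Proof.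
move=> /derivable1_diffP df /derivable1_diffP dg.
exact/derivable1_diffP/differentiable_comp.
Qed.

Lemma derivable_big_sum (I : Type) (r : seq I) (P : pred I) (F : I -> R -> R)
    (x : R) :
  (forall i, derivable (F i) x 1) ->
  derivable (fun y => \sum_(i <- r | P i) F i y) x 1.
Proof.
move=> dF; rewrite -fct_sumE.
by elim/big_ind: _ => [|f g|i _]; [exact: derivable_cst|exact: derivableD|].
Qed.

Lemma derive1n2_addr_affine (g : R -> R) (a b x : R) :
  (forall y, derivable g y 1) ->
  derive1n 2 (fun y => g y + (a * y + b)) x = derive1n 2 g x.
Proof.
move=> dg; rewrite /derive1n /=.
have -> : derive1 (fun y => g y + (a * y + b)) = fun y => derive1 g y + a.
  apply/funext => y; rewrite !derive1E.
  rewrite (_ : (fun y => _) = g + (fun y => a * y + b)) //.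
  by rewrite deriveD ?derive_affine //; exact: derivable_affine.
rewrite /derive1; do 2 f_equal; apply/funext => h /=.
by rewrite opprD addrACA subrr addr0.
Qed.

End RealDerivatives.

Section Signs.
Variable R : realType.

Lemma sgnE (b : bool) : sgn R b = 2 * ind R b - 1.
Proof. by case: b; rewrite /sgn /ind; ring. Qed.

Lemma normr_sgn_diff (a b : R) (ea eb : bool) : 0 < a -> a < b ->
  `|sgn R eb * b - sgn R ea * a| = if ea == eb then b - a else b + a.
Proof.
move=> a_gt0 ab.
have ba_gt0 : 0 < b - a by rewrite subr_gt0.
have bDa_gt0 : 0 < b + a by rewrite addr_gt0 // (lt_trans a_gt0 ab).
case: ea; case: eb; rewrite /sgn /=.
- by rewrite !mul1r gtr0_norm.
- by rewrite mul1r mulN1r -opprD normrN gtr0_norm.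
- by rewrite mul1r mulN1r opprK gtr0_norm.
- by rewrite !mulN1r opprK addrC -opprB normrN gtr0_norm.
Qed.

Lemma ln_normr_sgn_diff (a b : R) (ea eb : bool) : 0 < a -> a < b ->
  ln `|sgn R eb * b - sgn R ea * a| =
  ln (b - a) + (ind R ea + ind R eb) * ln ((b + a) / (b - a))
  + ind R ea * ind R eb * ln ((b - a) ^+ 2 / (b + a) ^+ 2).
Proof.
move=> a_gt0 ab.
have ba_gt0 : 0 < b - a by rewrite subr_gt0.
have bDa_gt0 : 0 < b + a by rewrite addr_gt0 // (lt_trans a_gt0 ab).
rewrite normr_sgn_diff // !ln_div ?posrE ?exprn_gt0 // !lnXn //.
by case: ea; case: eb; rewrite /ind /=; ring.
Qed.

End Signs.

Section TauFunctions.
Variables (R : realType) (M : nat) (p : 'I_M -> R).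

Definition hirota_exponent (ct : 'I_M -> R) (mu : {ffun 'I_M -> bool})
    (x t : R) : R :=
  \sum_(j < M) ind R (mu j) * Defs.eta p ct j x t
  + \sum_(j < M) \sum_(k < M | (j < k)%N) bjk p j k * ind R (mu j) * ind R (mu k).

Definition phase_shift (j : 'I_M) : R :=
  ln `|\prod_(k < M | k != j) ((p k + p j) / (p k - p j))|.

Lemma tauHE (ct : 'I_M -> R) (x t : R) :
  tauH p ct x t = \sum_mu expR (hirota_exponent ct mu x t).
Proof. by []. Qed.

Lemma tauH_gt0 (ct : 'I_M -> R) (x t : R) : 0 < tauH p ct x t.
Proof.
rewrite tauHE (bigD1 [ffun => false]) //= ltr_wpDr ?expR_gt0 //.
by apply: sumr_ge0 => mu _; exact/ltW/expR_gt0.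
Qed.

Lemma ThetaA_affine (c : 'I_M -> R) (A : {ffun 'I_M -> bool}) (x t : R) :
  ThetaA p c A x t = (\sum_(j < M) sgn R (A j) * p j) * x + ThetaA p c A 0 t.
Proof.
rewrite /ThetaA mulr_suml addrA; congr (_ + _).
by rewrite -big_split; apply: eq_bigr => j _; rewrite /Defs.theta /=; ring.
Qed.

Lemma hirota_exponent_affine (ct : 'I_M -> R) (mu : {ffun 'I_M -> bool})
    (x t : R) :
  hirota_exponent ct mu x t =
  (\sum_(j < M) ind R (mu j) * (2 * p j)) * x + hirota_exponent ct mu 0 t.
Proof.
rewrite /hirota_exponent mulr_suml addrA; congr (_ + _).
by rewrite -big_split; apply: eq_bigr => j _; rewrite /Defs.eta /=; ring.
Qed.

Lemma derivable_ln_tauH (ct : 'I_M -> R) (t x : R) :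
  derivable (fun y => ln (tauH p ct y t)) x 1.
Proof.
apply: (@derivable_comp _ (fun y => tauH p ct y t)); last first.
  by apply: ex_derive; apply: is_derive1_ln; exact: tauH_gt0.
apply: derivable_big_sum => mu.
apply: (@derivable_comp _ (fun y => hirota_exponent ct mu y t) expR);
  last exact: derivable_expR.
under eq_fun do rewrite hirota_exponent_affine.
exact: derivable_affine.
Qed.

Hypothesis p_gt0 : forall j, 0 < p j.
Hypothesis p_incr : forall j k : 'I_M, (j < k)%N -> p j < p k.

Lemma p_inj : injective p.
Proof.
move=> j k pjk; apply/val_inj/eqP.
by case: ltngtP => // /p_incr; rewrite pjk ltxx.
Qed.

Lemma ln_DeltaA (A : {ffun 'I_M -> bool}) :
  ln (DeltaA p A) = \sum_(j < M) \sum_(k < M | (j < k)%N)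
    (ln (p k - p j) + (ind R (A j) + ind R (A k)) * ln ((p k + p j) / (p k - p j))
     + bjk p j k * ind R (A j) * ind R (A k)).
Proof.
have sgn_diff_gt0 (j k : 'I_M) : (j < k)%N ->
    0 < `|sgn R (A k) * p k - sgn R (A j) * p j|.
  move=> jk; rewrite normr_sgn_diff ?p_gt0 ?p_incr //.
  by case: eqP => _; [rewrite subr_gt0 p_incr | rewrite addr_gt0].
rewrite /DeltaA normr_prod ln_prod; last first.
  by move=> j _; rewrite normr_prod; apply: prodr_gt0 => k; exact: sgn_diff_gt0.
apply: eq_bigr => j _; rewrite normr_prod ln_prod; last exact: sgn_diff_gt0.
by apply: eq_bigr => k jk; rewrite ln_normr_sgn_diff ?p_gt0 ?p_incr // /bjk; ring.
Qed.

Lemma sum_ind_phase_shift (mu : {ffun 'I_M -> bool}) :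
  \sum_(j < M) ind R (mu j) * phase_shift j =
  \sum_(j < M) \sum_(k < M | (j < k)%N)
    (ind R (mu j) + ind R (mu k)) * ln ((p k + p j) / (p k - p j)).
Proof.
have ratio_neq0 j k : k != j -> (p k + p j) / (p k - p j) != 0.
  move=> kj; rewrite mulf_neq0 ?invr_eq0 //; first by rewrite lt0r_neq0 ?addr_gt0.
  by rewrite subr_eq0; apply: contra kj => /eqP /p_inj ->.
have row_sum j : ind R (mu j) * phase_shift j =
  \sum_(k < M | k != j) ind R (mu j) * ln `|(p k + p j) / (p k - p j)|.
  rewrite /phase_shift normr_prod ln_prod ?mulr_sumr // => k kj.
  by rewrite normr_gt0 ratio_neq0.
rewrite (eq_bigr _ (fun j _ => row_sum j)) sum_ord_neq.
apply: eq_bigr => j _; apply: eq_bigr => k jk.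
have ratio_gt0 : 0 < (p k + p j) / (p k - p j).
  by rewrite divr_gt0 ?subr_gt0 ?addr_gt0 ?p_gt0 ?p_incr.
have -> : (p j + p k) / (p j - p k) = - ((p k + p j) / (p k - p j)).
  by rewrite -mulrN -invrN opprB addrC.
by rewrite normrN gtr0_norm //; ring.
Qed.

Lemma eta_ctilde (c : 'I_M -> R) (j : 'I_M) (x t : R) :
  Defs.eta p (ctilde p c) j x t =
  2 * theta p c j x t + phase_shift j.
Proof.
rewrite /Defs.eta /Defs.theta /ctilde -/(phase_shift _).
by have := p_gt0 j; rewrite lt0r => /andP[pj_neq0 _]; field.
Qed.

Lemma ThetaA_hirota (c : 'I_M -> R) (A : {ffun 'I_M -> bool}) (x t : R) :
  ThetaA p c A x t =
  ThetaA p c [ffun => false] x t + hirota_exponent (ctilde p c) A x t.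
Proof.
have sgn_part : \sum_(j < M) sgn R (A j) * theta p c j x t =
    \sum_(j < M) sgn R ([ffun => false] j) * theta p c j x t
    + 2 * \sum_(j < M) ind R (A j) * theta p c j x t.
  rewrite mulr_sumr -big_split; apply: eq_bigr => j _.
  by rewrite ffunE !sgnE /ind /=; ring.
have eta_part : \sum_(j < M) ind R (A j) * Defs.eta p (ctilde p c) j x t =
    2 * \sum_(j < M) ind R (A j) * theta p c j x t
    + \sum_(j < M) ind R (A j) * phase_shift j.
  rewrite mulr_sumr -big_split; apply: eq_bigr => j _.
  by rewrite eta_ctilde /=; ring.
have delta_part : ln (DeltaA p A) = ln (DeltaA p [ffun => false])
    + \sum_(j < M) ind R (A j) * phase_shift j
    + \sum_(j < M) \sum_(k < M | (j < k)%N) bjk p j k * ind R (A j) * ind R (A k).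
  rewrite sum_ind_phase_shift !ln_DeltaA -!big_split; apply: eq_bigr => j _.
  rewrite -!big_split; apply: eq_bigr => k _.
  by rewrite !ffunE /ind /=; ring.
rewrite /ThetaA /hirota_exponent sgn_part eta_part delta_part.
(* [ring] compares atoms up to conversion and would unfold the big operators,
   so they are abstracted first. *)
move: (\sum_(j < M) sgn R _ * _) (ln (DeltaA p _)) (2 * _) => s0 d0 th.
move: (\sum_(j < M) ind R (A j) * phase_shift j) => l.
by move: (\sum_(j < M) \sum_(k < M | _) _) => b; ring.
Qed.

Lemma tau_factor (c : 'I_M -> R) (x t : R) :
  tau p c x t = expR (ThetaA p c [ffun => false] x t) * tauH p (ctilde p c) x t.
Proof.
rewrite /tau tauHE mulr_sumr; apply: eq_bigr => A _.
by rewrite ThetaA_hirota expRD.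
Qed.

Lemma u_ctilde (c : 'I_M -> R) (x t : R) : u p c x t = uH p (ctilde p c) x t.
Proof.
have ln_tau y : ln (tau p c y t) = ln (tauH p (ctilde p c) y t)
    + ((\sum_(j < M) sgn R ([ffun => false] j) * p j) * y
       + ThetaA p c [ffun => false] 0 t).
  rewrite tau_factor lnM ?posrE ?expR_gt0 ?tauH_gt0 // expRK.
  by rewrite (ThetaA_affine _ _ y) addrC.
rewrite /u /uH (funext ln_tau) derive1n2_addr_affine //.
exact: derivable_ln_tauH.
Qed.

End TauFunctions.

Lemma ctilde_shift (R : realType) (M : nat) (p c : 'I_M -> R) (j : 'I_M) :
  ctilde p c j = c j + ctilde p (fun=> 0) j.
Proof. by rewrite /ctilde add0r. Qed.

Theorem proposition1 (R : realType) (M : nat) (p : 'I_M -> R)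
  (hM : (1 <= M)%N)
  (hpos : forall j : 'I_M, 0 < p j)
  (hinc : forall j k : 'I_M, (j < k)%N -> p j < p k) :
  (forall (c : 'I_M -> R) (x t : R), u p c x t = uH p (ctilde p c) x t) /\
  (forall ct : 'I_M -> R, exists c : 'I_M -> R, forall x t : R,
      u p c x t = uH p ct x t).
Proof.
split=> [c x t | ct]; first exact: u_ctilde.
exists (fun j => ct j - ctilde p (fun=> 0) j) => x t.
have ctilde_ct : ctilde p (fun j => ct j - ctilde p (fun=> 0) j) = ct.
  by apply/funext => j; rewrite ctilde_shift subrK.
by rewrite (@u_ctilde _ _ _ hpos hinc) ctilde_ct.
Qed.
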